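(* Let $(b,c)$ be a weighted graph over $V$ and $m$ a measure on $V$ satisfying condition (A). Let $\alpha>0$, $p\in[1,\infty)$ and $u\in\ell^p(V,m)\cap\widetilde F$ with $(\widetilde L+\alpha)u\ge0$ on $V$. Then $u\ge0$. In particular, every $u\in\ell^p(V,m)\cap\widetilde F$ with $(\widetilde L+\alpha)u=0$ satisfies $u\equiv0$.
   Context: Let $V$ be a countably infinite set. A weighted graph over $V$ is a pair $(b,c)$ of maps $b:V\times V\to[0,\infty)$ and $c:V\to[0,\infty)$ with $b(x,x)=0$, $b(x,y)=b(y,x)$ and $\sum_{y\in V}b(x,y)<\infty$ for all $x,y\in V$. A measure on $V$ is a map $m:V\to(0,\infty)$; $\ell^p(V,m)$ is the space of real functions $u$ with $\sum_x m(x)|u(x)|^p<\infty$. Let $\widetilde F=\{u:V\to\mathbb R:\ \sum_y b(x,y)|u(y)|<\infty\text{ for all }x\}$ and define $\widetilde Lu(x)=\frac1{m(x)}\sum_y b(x,y)(u(x)-u(y))+\frac{c(x)}{m(x)}u(x)$ for $u\in\widetilde F$. Condition (A): for every sequence $(x_n)_{n\in\mathbb N}$ in $V$ with $b(x_n,x_{n+1})>0$ for all $n$, one has $\sum_{n\in\mathbb N}m(x_n)=\infty$. *)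

From Stdlib Require Import Reals Lra List ClassicalEpsilon.
Open Scope R_scope.

Definition countably_infinite (V : Type) : Prop :=
  exists (f : V -> nat) (g : nat -> V),
    (forall x, g (f x) = x) /\ (forall n, f (g n) = n).

Fixpoint lsum {V : Type} (f : V -> R) (l : list V) : R :=
  match l with nil => 0 | cons x l' => f x + lsum f l' end.

Definition abs_summable {V : Type} (f : V -> R) : Prop :=
  exists M, forall l : list V, NoDup l -> lsum (fun x => Rabs (f x)) l <= M.

(* unconditional sum (limit along the net of finite subsets) *)
Definition has_sum {V : Type} (f : V -> R) (s : R) : Prop :=
  forall eps, 0 < eps -> exists l0 : list V,
    forall l, NoDup l -> incl l0 l -> Rabs (lsum f l - s) < eps.

(* the value of the sum \sum_{y in V} f y (junk 0 if not summable) *)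
Definition tsum {V : Type} (f : V -> R) : R :=
  match excluded_middle_informative (exists s, has_sum f s) with
  | left H => proj1_sig (constructive_indefinite_description _ H)
  | right _ => 0
  end.

Definition weighted_graph {V : Type} (b : V -> V -> R) (c : V -> R) : Prop :=
  (forall x y, 0 <= b x y) /\ (forall x, 0 <= c x) /\
  (forall x, b x x = 0) /\ (forall x y, b x y = b y x) /\
  (forall x, abs_summable (fun y => b x y)).

Definition measure {V : Type} (m : V -> R) : Prop := forall x, 0 < m x.

(* |t|^p, with 0^p = 0 (p >= 1) *)
Definition rpow_abs (t p : R) : R :=
  if Req_EM_T t 0 then 0 else Rpower (Rabs t) p.

Definition in_lp {V : Type} (m : V -> R) (p : R) (u : V -> R) : Prop :=
  abs_summable (fun x => m x * rpow_abs (u x) p).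

Definition in_Ftilde {V : Type} (b : V -> V -> R) (u : V -> R) : Prop :=
  forall x, abs_summable (fun y => b x y * u y).

Definition Ltilde {V : Type} (b : V -> V -> R) (c m : V -> R) (u : V -> R) (x : V) : R :=
  / m x * tsum (fun y => b x y * (u x - u y)) + c x / m x * u x.

Definition condA {V : Type} (b : V -> V -> R) (m : V -> R) : Prop :=
  forall xs : nat -> V, (forall n, 0 < b (xs n) (xs (S n))) ->
    forall M : R, exists N : nat, M < sum_f_R0 (fun n => m (xs n)) N.

(* If [u] took a negative value at [x0], then [(L + alpha) u >= 0] forces a neighbour
   [x1] of [x0] with [u x1 < u x0]: otherwise every term of [sum_y b(x0,y)(u x0 - u y)]
   is nonpositive, while [c u + alpha m u < 0] at [x0].  Iterating gives a path
   [x0, x1, ...] along which [u] strictly decreases, so its vertices are distinct and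
   [|u|^p >= |u x0|^p > 0] on it.  Hence [|u x0|^p * sum_n m(x_n) <= ||u||_p^p < oo],
   contradicting condition (A).  Applying this to [u] and [-u] gives the uniqueness
   statement. *)
From Stdlib Require Import Reals.
From Stdlib Require Import Lra Lia List ClassicalEpsilon FunctionalExtensionality FinFun.
Open Scope R_scope.

Lemma lsum_opp {V : Type} (f : V -> R) l : lsum (fun x => - f x) l = - lsum f l.
Proof. induction l as [|x l IH]; simpl; [lra | rewrite IH; lra]. Qed.

Lemma lsum_nonneg {V : Type} (f : V -> R) l : (forall y, 0 <= f y) -> 0 <= lsum f l.
Proof. intro Hf; induction l as [|x l IH]; simpl; [lra | specialize (Hf x); lra]. Qed.

Lemma lsum_app {V : Type} (f : V -> R) l1 l2 : lsum f (l1 ++ l2) = lsum f l1 + lsum f l2.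
Proof. induction l1 as [|x l IH]; simpl; [lra | rewrite IH; lra]. Qed.

Lemma NoDup_nodup_incl {V : Type} (l : list V) :
  exists l', NoDup l' /\ incl l l'.
Proof.
  assert (dec : forall x y : V, {x = y} + {x <> y})
    by (intros x y; apply excluded_middle_informative).
  exists (nodup dec l); split; [apply NoDup_nodup |].
  intros z Hz; apply nodup_In; exact Hz.
Qed.

Lemma has_sum_unique {V : Type} (f : V -> R) s1 s2 :
  has_sum f s1 -> has_sum f s2 -> s1 = s2.
Proof.
  intros H1 H2. destruct (Req_dec s1 s2) as [E|E]; [exact E | exfalso].
  set (eps := Rabs (s1 - s2) / 2).
  assert (Heps : 0 < eps)
    by (assert (0 < Rabs (s1 - s2)) by (apply Rabs_pos_lt; lra); unfold eps; lra).
  destruct (H1 eps Heps) as [l1 Hl1], (H2 eps Heps) as [l2 Hl2].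
  destruct (NoDup_nodup_incl (l1 ++ l2)) as [l [Hnd Hincl]].
  specialize (Hl1 l Hnd (fun z Hz => Hincl z (in_or_app _ _ _ (or_introl Hz)))).
  specialize (Hl2 l Hnd (fun z Hz => Hincl z (in_or_app _ _ _ (or_intror Hz)))).
  pose proof (Rabs_triang (s1 - lsum f l) (lsum f l - s2)) as Htri.
  replace (s1 - lsum f l + (lsum f l - s2)) with (s1 - s2) in Htri by ring.
  rewrite <- Rabs_Ropp in Hl1.
  replace (- (lsum f l - s1)) with (s1 - lsum f l) in Hl1 by ring.
  unfold eps in *; lra.
Qed.

Lemma has_sum_opp {V : Type} (f : V -> R) s :
  has_sum f s -> has_sum (fun x => - f x) (- s).
Proof.
  intros Hs eps Heps. destruct (Hs eps Heps) as [l0 Hl0]. exists l0.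
  intros l Hnd Hincl. rewrite lsum_opp.
  replace (- lsum f l - - s) with (- (lsum f l - s)) by ring.
  rewrite Rabs_Ropp; auto.
Qed.

Lemma has_sum_nonneg {V : Type} (f : V -> R) s :
  has_sum f s -> (forall y, 0 <= f y) -> 0 <= s.
Proof.
  intros Hs Hf. destruct (Rle_or_lt 0 s) as [Hle|Hlt]; [exact Hle |].
  destruct (Hs (- s)) as [l0 Hl0]; [lra |].
  destruct (NoDup_nodup_incl l0) as [l [Hnd Hincl]].
  specialize (Hl0 l Hnd Hincl). apply Rabs_def2 in Hl0.
  pose proof (lsum_nonneg f l Hf). lra.
Qed.

Lemma tsum_spec {V : Type} (f : V -> R) s : has_sum f s -> tsum f = s.
Proof.
  intro Hs. unfold tsum. destruct excluded_middle_informative as [H|H].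
  - destruct (constructive_indefinite_description _ H) as [s' Hs']; simpl.
    exact (has_sum_unique f s' s Hs' Hs).
  - exfalso; apply H; exists s; exact Hs.
Qed.

Lemma tsum_not_summable {V : Type} (f : V -> R) :
  ~ (exists s, has_sum f s) -> tsum f = 0.
Proof.
  intro Hn. unfold tsum. destruct excluded_middle_informative; [contradiction | reflexivity].
Qed.

Lemma tsum_opp {V : Type} (f : V -> R) : tsum (fun x => - f x) = - tsum f.
Proof.
  destruct (classic (exists s, has_sum f s)) as [[s Hs]|Hn].
  - rewrite (tsum_spec f s Hs). apply tsum_spec, has_sum_opp, Hs.
  - assert (Hn' : ~ exists s, has_sum (fun x => - f x) s).
    { intros [s Hs]; apply Hn; exists (- s).
      apply has_sum_opp in Hs.
      replace f with (fun x => - - f x) by (apply functional_extensionality; intro; ring).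
      exact Hs. }
    rewrite (tsum_not_summable f Hn), (tsum_not_summable _ Hn'). lra.
Qed.

Lemma tsum_nonneg {V : Type} (f : V -> R) : (forall y, 0 <= f y) -> 0 <= tsum f.
Proof.
  intro Hf. unfold tsum. destruct excluded_middle_informative as [H|H]; [| lra].
  destruct (constructive_indefinite_description _ H) as [s Hs]; simpl.
  exact (has_sum_nonneg f s Hs Hf).
Qed.

Lemma tsum_nonpos {V : Type} (f : V -> R) : (forall y, f y <= 0) -> tsum f <= 0.
Proof.
  intro Hf. assert (H : 0 <= tsum (fun x => - f x)).
  { apply tsum_nonneg; intro y; specialize (Hf y); lra. }
  rewrite tsum_opp in H; lra.
Qed.

Lemma rpow_abs_opp t p : rpow_abs (- t) p = rpow_abs t p.
Proof.
  unfold rpow_abs.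
  destruct (Req_EM_T (- t) 0), (Req_EM_T t 0); try lra.
  now rewrite Rabs_Ropp.
Qed.

Lemma in_lp_opp {V : Type} (m : V -> R) p u :
  in_lp m p u -> in_lp m p (fun x => - u x).
Proof.
  unfold in_lp. intro H.
  replace (fun x => m x * rpow_abs (- u x) p) with (fun x => m x * rpow_abs (u x) p);
    [exact H |].
  apply functional_extensionality; intro x; now rewrite rpow_abs_opp.
Qed.

Lemma Ltilde_opp {V : Type} (b : V -> V -> R) (c m u : V -> R) x :
  Ltilde b c m (fun y => - u y) x = - Ltilde b c m u x.
Proof.
  unfold Ltilde.
  replace (fun y => b x y * (- u x - - u y)) with (fun y => - (b x y * (u x - u y)))
    by (apply functional_extensionality; intro; ring).
  rewrite tsum_opp; ring.
Qed.

Lemma rpow_abs_le_of_le_neg t0 t p :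
  0 <= p -> t <= t0 -> t0 < 0 -> rpow_abs t0 p <= rpow_abs t p.
Proof.
  intros Hp Ht Ht0. unfold rpow_abs.
  destruct (Req_EM_T t0 0), (Req_EM_T t 0); try lra.
  apply Rle_Rpower_l; [exact Hp |]. rewrite !Rabs_left by lra. lra.
Qed.

Lemma rpow_abs_pos t p : t <> 0 -> 0 < rpow_abs t p.
Proof.
  intro Ht. unfold rpow_abs. destruct Req_EM_T; [contradiction | apply exp_pos].
Qed.

Section DescendingPaths.

Variables (V : Type) (b : V -> V -> R) (m u : V -> R).

Hypothesis descent : forall x, u x < 0 -> exists y, 0 < b x y /\ u y < u x.

Lemma descending_path x0 :
  u x0 < 0 ->
  exists xs : nat -> V, xs O = x0 /\
    forall n, 0 < b (xs n) (xs (S n)) /\ u (xs (S n)) < u (xs n).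
Proof.
  intro Hx0.
  assert (Hex : forall x, exists y, u x < 0 -> 0 < b x y /\ u y < u x).
  { intro x. destruct (Rlt_or_le (u x) 0) as [Hx|Hx].
    - destruct (descent x Hx) as [y Hy]; exists y; auto.
    - exists x; intro; lra. }
  set (next x := proj1_sig (constructive_indefinite_description _ (Hex x))).
  assert (Hnext : forall x, u x < 0 -> 0 < b x (next x) /\ u (next x) < u x)
    by (intro x; exact (proj2_sig (constructive_indefinite_description _ (Hex x)))).
  exists (fun n => Nat.iter n next x0); split; [reflexivity |].
  assert (Hneg : forall n, u (Nat.iter n next x0) < 0).
  { induction n as [|n IH]; [exact Hx0 |].
    simpl; pose proof (Hnext _ IH); lra. }
  intro n; exact (Hnext _ (Hneg n)).
Qed.

Lemma strictly_decreasing_along (xs : nat -> V) :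
  (forall n, u (xs (S n)) < u (xs n)) -> forall n k, (n < k)%nat -> u (xs k) < u (xs n).
Proof.
  intros Hdec n k Hnk. induction Hnk as [|k _ IH]; [apply Hdec |].
  specialize (Hdec k); lra.
Qed.

Lemma strictly_decreasing_injective (xs : nat -> V) :
  (forall n, u (xs (S n)) < u (xs n)) -> Injective xs.
Proof.
  intros Hdec i j Hij.
  destruct (Nat.lt_total i j) as [H|[H|H]]; [| exact H |];
    apply (strictly_decreasing_along xs Hdec) in H; rewrite Hij in H; lra.
Qed.

Lemma in_lp_partial_sums_bounded (p : R) (xs : nat -> V) (k : R) :
  measure m -> in_lp m p u -> Injective xs -> (forall n, k <= rpow_abs (u (xs n)) p) ->
  exists M, forall N, k * sum_f_R0 (fun n => m (xs n)) N <= M.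
Proof.
  intros Hm [M HM] Hinj Hk. exists M. intro N.
  set (F x := Rabs (m x * rpow_abs (u x) p)).
  assert (HF : forall n, k * m (xs n) <= F (xs n)).
  { intro n. pose proof (Hm (xs n)). specialize (Hk n).
    unfold F. eapply Rle_trans; [| apply Rle_abs].
    rewrite Rmult_comm. apply Rmult_le_compat_l; lra. }
  assert (Hsum : k * sum_f_R0 (fun n => m (xs n)) N <= lsum F (map xs (seq 0 (S N)))).
  { induction N as [|N IH].
    - simpl. specialize (HF O). lra.
    - rewrite seq_S, map_app, lsum_app. cbn [sum_f_R0 lsum map Nat.add].
      specialize (HF (S N)). lra. }
  eapply Rle_trans; [exact Hsum |]. apply HM.
  apply Injective_map_NoDup; [exact Hinj | apply seq_NoDup].
Qed.

Lemma descent_nonneg_of_in_lp (p : R) :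
  measure m -> condA b m -> 0 <= p -> in_lp m p u -> forall x, 0 <= u x.
Proof.
  intros Hm HA Hp Hlp x0. destruct (Rle_or_lt 0 (u x0)) as [Hle|Hx0]; [exact Hle | exfalso].
  destruct (descending_path x0 Hx0) as [xs [Hstart Hpath]].
  assert (Hdec : forall n, u (xs (S n)) < u (xs n)) by apply Hpath.
  set (k := rpow_abs (u x0) p).
  assert (Hkpos : 0 < k) by (apply rpow_abs_pos; lra).
  assert (Hk : forall n, k <= rpow_abs (u (xs n)) p).
  { intro n. apply rpow_abs_le_of_le_neg; [exact Hp | | exact Hx0].
    rewrite <- Hstart. destruct n as [|n]; [lra |].
    apply Rlt_le, (strictly_decreasing_along xs Hdec); lia. }
  destruct (in_lp_partial_sums_bounded p xs k Hm Hlp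
              (strictly_decreasing_injective xs Hdec) Hk) as [M HM].
  destruct (HA xs (fun n => proj1 (Hpath n)) (M / k)) as [N HN].
  apply (Rmult_lt_compat_l k) in HN; [| exact Hkpos].
  replace (k * (M / k)) with M in HN by (field; lra).
  specialize (HM N); lra.
Qed.

End DescendingPaths.

(* [u] need not lie in [F~]: the argument only uses that a sum of nonpositive terms is
   nonpositive, which also holds for the junk value [tsum = 0] of a non-summable family. *)
Lemma supersolution_descent {V : Type} (b : V -> V -> R) (c m u : V -> R) alpha x :
  weighted_graph b c -> measure m -> 0 < alpha ->
  0 <= Ltilde b c m u x + alpha * u x -> u x < 0 ->
  exists y, 0 < b x y /\ u y < u x.
Proof.
  intros [Hb [Hc _]] Hm Halpha HL Hx. unfold Ltilde in HL.
  set (T := tsum (fun y => b x y * (u x - u y))) in *.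
  pose proof (Hm x) as Hmx. pose proof (Hc x) as Hcx.
  assert (HT : 0 < T).
  { assert (H : 0 <= m x * (/ m x * T + c x / m x * u x + alpha * u x))
      by (apply Rmult_le_pos; lra).
    replace (m x * (/ m x * T + c x / m x * u x + alpha * u x))
      with (T + c x * u x + alpha * m x * u x) in H by (field; lra).
    assert (c x * u x <= 0) by nra.
    assert (0 < alpha * m x) by (apply Rmult_lt_0_compat; lra).
    nra. }
  apply NNPP; intro Hno.
  assert (T <= 0); [| lra].
  apply tsum_nonpos; intro y. specialize (Hb x y).
  destruct (Rle_or_lt (u x) (u y)); [nra |].
  destruct Hb as [Hb|Hb]; [exfalso; apply Hno; exists y; auto | rewrite <- Hb; lra].
Qed.

Theorem mainTheorem3 (V : Type) (b : V -> V -> R) (c m : V -> R)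
  (HV : countably_infinite V) (Hg : weighted_graph b c) (Hm : measure m)
  (HA : condA b m) (alpha p : R) (Halpha : 0 < alpha) (Hp : 1 <= p) :
  (forall u : V -> R, in_lp m p u -> in_Ftilde b u ->
     (forall x, 0 <= Ltilde b c m u x + alpha * u x) ->
     forall x, 0 <= u x) /\
  (forall u : V -> R, in_lp m p u -> in_Ftilde b u ->
     (forall x, Ltilde b c m u x + alpha * u x = 0) ->
     forall x, u x = 0).
Proof.
  assert (Hmin : forall u, in_lp m p u ->
            (forall x, 0 <= Ltilde b c m u x + alpha * u x) -> forall x, 0 <= u x).
  { intros u Hlp HL. apply (descent_nonneg_of_in_lp V b m u) with p; try lra; try assumption.
    intros x Hx. exact (supersolution_descent b c m u alpha x Hg Hm Halpha (HL x) Hx). }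
  split; [intros u Hlp _ HL; exact (Hmin u Hlp HL) |].
  intros u Hlp _ HL x.
  assert (Hpos : 0 <= u x) by (apply Hmin; [exact Hlp | intro z; rewrite HL; lra]).
  assert (Hneg : 0 <= - u x).
  { apply (Hmin (fun z => - u z)); [exact (in_lp_opp m p u Hlp) |].
    intro z. rewrite Ltilde_opp. pose proof (HL z). lra. }
  lra.
Qed.
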